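(* Let $q$ be a prime power and $\Gamma\subseteq\mathbb{F}_q^*$ a multiplicative subgroup. Let $h_1,h_2:\mathbb{F}_q\to\mathbb{C}$ be functions supported on $\Gamma$ and let $g:\mathbb{F}_q\to\mathbb{C}$ be an arbitrary function. Then $$\frac1{|\Gamma|}\sum_{\gamma\in\Gamma}\langle\mathrm{T}^g_\Gamma h_1^\gamma,h_2^\gamma\rangle=\sum_{\alpha=1}^{|\Gamma|}c_\alpha(h_1)\overline{c_\alpha(h_2)}\cdot\langle\mathrm{T}^g_\Gamma f_\alpha,f_\alpha\rangle.$$
   Context: $\mathrm{T}^g_\Gamma$ is the matrix indexed by $\Gamma$ with entries $\mathrm{T}^g_\Gamma(x,y)=g(x-y)$ for $x,y\in\Gamma$, and $\langle\mathrm{T}^g_\Gamma a,b\rangle=\sum_{x,y\in\Gamma}g(x-y)a(y)\overline{b(x)}$. For $\gamma\in\mathbb{F}_q^*$, $h^\gamma(x)=h(\gamma x)$. Let $t=|\Gamma|$, $n=(q-1)/t$, $\mathbf g$ a primitive root, $\Gamma=\{\mathbf g^{nl}:0\le l<t\}$; $\chi_\alpha(\mathbf g^{nl})=e^{2\pi i\alpha l/t}$ on $\Gamma$ and $0$ off $\Gamma$, $f_\alpha=|\Gamma|^{-1/2}\chi_\alpha$ ($\alpha\in[t]$), and $c_\alpha(\varphi)=\sum_{x\in\Gamma}\varphi(x)\overline{f_\alpha(x)}$. *)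

From mathcomp Require Import all_boot all_order all_algebra all_field.
Set Implicit Arguments. Unset Strict Implicit. Unset Printing Implicit Defensive.
Import GRing.Theory Num.Theory.
Local Open Scope ring_scope.

Definition is_mult_subgroup (F : finFieldType) (G : {set F}) : Prop :=
  [/\ 1 \in G, 0 \notin G,
      (forall x y, x \in G -> y \in G -> x * y \in G)
    & (forall x, x \in G -> x^-1 \in G)].

Definition supported_on (F : finFieldType) (G : {set F}) (h : F -> algC) : Prop :=
  forall x, x \notin G -> h x = 0.

Definition Tform (F : finFieldType) (G : {set F}) (gf : F -> algC)
  (a b : F -> algC) : algC :=
  \sum_(x in G) \sum_(y in G) gf (x - y) * a y * Num.conj (b x).

Definition dil (F : finFieldType) (h : F -> algC) (c : F) : F -> algC :=
  fun x => h (c * x).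

(* e^{2 pi i / t}: t.-root (-1) is e^{i pi / t} (minimal nonneg. argument) *)
Definition omega (t : nat) : algC := (t.-root (-1)) ^+ 2.

Definition chi (F : finFieldType) (G : {set F}) (g : F) (alpha : nat) (x : F)
  : algC :=
  let t := #|G| in
  let n := (#|F|.-1 %/ t)%N in
  if x \in G then
    match [pick l : 'I_t | g ^+ (n * l) == x] with
    | Some l => omega t ^+ (alpha * l)
    | None => 0
    end
  else 0.

Definition fvec (F : finFieldType) (G : {set F}) (g : F) (alpha : nat) (x : F)
  : algC := (sqrtC (#|G|%:R))^-1 * chi G g alpha x.

Definition coef (F : finFieldType) (G : {set F}) (g : F) (alpha : nat)
  (phi : F -> algC) : algC :=
  \sum_(x in G) phi x * Num.conj (fvec G g alpha x).

From mathcomp Require Import all_boot all_order all_algebra all_field.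
From mathcomp Require Import ring.
Import Order.TTheory GRing.Theory Num.Theory.
Set Implicit Arguments. Unset Strict Implicit. Unset Printing Implicit Defensive.
Local Open Scope ring_scope.

(* Gamma is the cyclic group generated by g^n, and chi_a (a = 1..t) are its
   characters; they are orthogonal because omega t is a primitive t-th root of
   unity. Orthogonality, together with the substitution x -> c y in the sums
   defining the coefficients, gives for x, y in Gamma
     sum_a c_a(h1) conj(c_a(h2)) f_a(y) conj(f_a(x))
       = t^-1 sum_(c in Gamma) h1(c y) conj(h2(c x)),
   and summing both sides against g(x - y) yields the identity.
   Primitivity of omega t = (t.-root (-1))^2 comes from the choice of
   t.-root (-1) as the t-th root of -1 of largest real part in the upper half
   plane: if its order were smaller, some root of it would have a larger real
   part. *)

Lemma mul_conjC_expr_eq1 (C : numClosedFieldType) (x : C) n :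
  (0 < n)%N -> x ^+ n * (x ^+ n)^* = 1 -> x * x^* = 1.
Proof.
move=> n_gt0 xn1; have : (x * x^*) ^+ n == 1 by rewrite exprMn -rmorphXn xn1.
by rewrite pexpr_eq1 ?mul_conjC_ge0 // => /eqP.
Qed.

Lemma unity_root_mul_conjC (C : numClosedFieldType) (x : C) n :
  (0 < n)%N -> x ^+ n = 1 -> x * x^* = 1.
Proof.
by move=> n_gt0 xn1; apply: (mul_conjC_expr_eq1 n_gt0); rewrite xn1 rmorph1 mulr1.
Qed.

Lemma sum_unity_root_expr (R : idomainType) (r : R) m :
  r ^+ m = 1 -> \sum_(k < m) r ^+ k = if r == 1 then m%:R else 0.
Proof.
move=> rm1; case: eqP => [->|/eqP r_neq1].
  by rewrite (eq_bigr (fun=> 1)) ?sumr_const ?card_ord // => k _; rewrite expr1n.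
have /eqP := subrX1 r m; rewrite rm1 subrr eq_sym mulf_eq0 subr_eq0.
by rewrite (negPf r_neq1) => /eqP.
Qed.

Lemma prim_root_mul_conjC_eq1 (C : numClosedFieldType) (xi : C) m j l :
  m.-primitive_root xi -> (j < m)%N -> (l < m)%N ->
  (xi ^+ j * (xi ^+ l)^* == 1) = (j == l).
Proof.
move=> xi_prim jm lm; have m_gt0 := prim_order_gt0 xi_prim.
have xil : xi ^+ l * (xi ^+ l)^* = 1.
  apply: (unity_root_mul_conjC m_gt0).
  by rewrite exprAC (prim_expr_order xi_prim) expr1n.
apply/eqP/eqP => [xij1|->//]; apply/eqP.
have : xi ^+ j == xi ^+ l by rewrite -[xi ^+ j]mulr1 -xil mulrCA xij1 mulr1.
by rewrite (eq_prim_root_expr xi_prim) !modn_small.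
Qed.

Lemma sum_prim_root_expr_conjC (C : numClosedFieldType) (xi : C) m j l :
  m.-primitive_root xi -> (j < m)%N -> (l < m)%N ->
  \sum_(k < m) (xi ^+ j * (xi ^+ l)^*) ^+ k = if j == l then m%:R else 0.
Proof.
move=> xi_prim jm lm; rewrite -(prim_root_mul_conjC_eq1 xi_prim jm lm).
apply: sum_unity_root_expr.
rewrite exprMn -rmorphXn -!exprM [(j * m)%N]mulnC [(l * m)%N]mulnC !exprM.
by rewrite (prim_expr_order xi_prim) !expr1n rmorph1 mulr1.
Qed.

Lemma sqr_normC_subr1 (C : numClosedFieldType) (u : C) :
  u * u^* = 1 -> `|1 - u| ^+ 2 = 2 - 2 * 'Re u.
Proof.
move=> u_unit; rewrite normCK ReE rmorphB rmorph1 [2 * _]mulrC divfK ?pnatr_eq0 //.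
have -> : (1 - u) * (1 - u^*) = 1 + u * u^* - (u + u^*) by ring.
by rewrite u_unit.
Qed.

Lemma sum_sqr_normC_geom (C : numClosedFieldType) (w0 xi : C) m :
  m.-primitive_root xi -> w0 * w0^* = 1 ->
  \sum_(k < m) `|\sum_(j < m) (w0 * xi ^+ k) ^+ j| ^+ 2 = m%:R * m%:R.
Proof.
move=> xi_prim w0_unit.
have expand k j l : (w0 * xi ^+ k) ^+ j * ((w0 * xi ^+ k) ^+ l)^* =
    w0 ^+ j * (w0 ^+ l)^* * (xi ^+ j * (xi ^+ l)^*) ^+ k.
  rewrite !rmorphXn !rmorphM !rmorphXn !exprMn -!exprM.
  by rewrite [(k * j)%N]mulnC [(k * l)%N]mulnC; ring.
transitivity (\sum_(j < m) \sum_(l < m)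
    w0 ^+ j * (w0 ^+ l)^* * \sum_(k < m) (xi ^+ j * (xi ^+ l)^*) ^+ k).
  under eq_bigr do rewrite normCK rmorph_sum mulr_suml.
  rewrite exchange_big; apply: eq_bigr => j _.
  under eq_bigr do rewrite mulr_sumr.
  rewrite exchange_big; apply: eq_bigr => l _.
  by rewrite mulr_sumr; apply: eq_bigr => k _; rewrite expand.
rewrite [RHS](_ : _ = \sum_(j < m) m%:R); last first.
  by rewrite sumr_const card_ord mulr_natr.
apply: eq_bigr => j _.
under eq_bigr do rewrite sum_prim_root_expr_conjC ?ltn_ord //.
rewrite (bigD1 j) //= eqxx big1 => [|l /negPf]; last first.
  by rewrite eq_sym -val_eqE => ->; rewrite mulr0.
by rewrite addr0 rmorphXn -exprMn w0_unit expr1n mul1r.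
Qed.

Lemma sqr_normC_geom_le1 (C : numClosedFieldType) (u z : C) m :
  u * u^* = 1 -> u ^+ m = z -> z != 1 -> 'Re u <= 'Re z ->
  `|\sum_(j < m) u ^+ j| ^+ 2 <= 1.
Proof.
move=> u_unit umz z_neq1 Re_uz.
have z_unit : z * z^* = 1 by rewrite -umz rmorphXn -exprMn u_unit expr1n.
have dz_gt0 : 0 < `|1 - z| ^+ 2.
  by rewrite exprn_gt0 // normr_gt0 subr_eq0 eq_sym.
have dzu : `|1 - z| ^+ 2 <= `|1 - u| ^+ 2.
  by rewrite !sqr_normC_subr1 // lerD2l lerN2 ler_pM2l ?ltr0n.
have geom : `|1 - u| ^+ 2 * `|\sum_(j < m) u ^+ j| ^+ 2 = `|1 - z| ^+ 2.
  by rewrite -exprMn -normrM -opprB mulNr -subrX1 umz opprB.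
rewrite -(ler_pM2l dz_gt0) mulr1 -[X in _ <= X]geom.
by rewrite ler_wpM2r ?exprn_ge0.
Qed.

Lemma exists_rootC_Re_gt (z : algC) m : (1 < m)%N -> z * z^* = 1 -> z != 1 ->
  exists2 w, w ^+ m = z & 'Re z < 'Re w.
Proof.
move=> m_gt1 z_unit z_neq1; have m_gt0 := ltnW m_gt1.
have [xi xi_prim] := C_prim_root_exists m_gt0.
pose w0 := m.-root z; have w0mz : w0 ^+ m = z by rewrite rootCK.
have w0_unit : w0 * w0^* = 1 by apply: (mul_conjC_expr_eq1 m_gt0); rewrite w0mz.
have xi_unit : xi * xi^* = 1.
  exact: unity_root_mul_conjC m_gt0 (prim_expr_order xi_prim).
have root_k (k : nat) : (w0 * xi ^+ k) ^+ m = z.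
  by rewrite exprMn w0mz exprAC (prim_expr_order xi_prim) expr1n mulr1.
have [/existsP [k Re_k] | /existsPn Re_le] :=
  boolP [exists k : 'I_m, 'Re z < 'Re (w0 * xi ^+ k)].
  by exists (w0 * xi ^+ k).
(* Otherwise every geometric sum over an m-th root of z has norm at most 1,
   while by Parseval their squared norms add up to m^2. *)
have geom_le1 (k : 'I_m) : `|\sum_(j < m) (w0 * xi ^+ k) ^+ j| ^+ 2 <= 1.
  apply: sqr_normC_geom_le1 (root_k k) z_neq1 _.
    by rewrite rmorphM rmorphXn mulrACA -exprMn xi_unit expr1n w0_unit mulr1.
  by move: (Re_le k); rewrite real_ltNge ?Creal_Re // negbK.
have : m%:R * m%:R <= m%:R :> algC.
  rewrite -(sum_sqr_normC_geom xi_prim w0_unit).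
  apply: le_trans (ler_sum _ (fun k _ => geom_le1 k)) _.
  by rewrite sumr_const card_ord.
by rewrite -natrM ler_nat -[X in (_ <= X)%N]muln1 leq_pmul2l // leqNgt m_gt1.
Qed.

Lemma omega_prim t : (0 < t)%N -> t.-primitive_root (omega t).
Proof.
move=> t_gt0; pose z := t.-root (-1 : algC).
have zt : z ^+ t = -1 by rewrite rootCK.
have N1_neq1 : (-1 : algC) != 1.
  by rewrite -subr_eq0 -opprD oppr_eq0 -mulr2n pnatr_eq0.
have omega_t : omega t ^+ t = 1.
  by rewrite /omega -/z -exprM mulnC exprM zt sqrrN expr1n.
have [d d_prim d_dvd_t] := prim_order_exists t_gt0 omega_t.
pose m := (t %/ d)%N; have tE : (m * d)%N = t := divnK d_dvd_t.
have zd : z ^+ d = -1.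
  have : (z ^+ d) ^+ 2 == 1.
    rewrite -exprM mulnC exprM.
    by have := prim_expr_order d_prim; rewrite /omega => ->.
  rewrite sqrf_eq1 => /orP[/eqP zd1 | /eqP //].
  move: zt; rewrite -tE mulnC exprM zd1 expr1n => /eqP.
  by rewrite eq_sym (negPf N1_neq1).
have [m_le1 | m_gt1] := leqP m 1.
  have m_gt0 : (0 < m)%N.
    by rewrite divn_gt0 ?(prim_order_gt0 d_prim) //; exact: dvdn_leq.
  have t_eq_d : t = d.
    by rewrite -tE (_ : m = 1%N) ?mul1n //; apply/eqP; rewrite eqn_leq m_le1.
  by move: d_prim; rewrite -t_eq_d.
have z_unit : z * z^* = 1.
  apply: (@unity_root_mul_conjC _ _ (2 * t)); first by rewrite muln_gt0.
  by rewrite mulnC exprM zt sqrrN expr1n.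
have z_neq1 : z != 1 by apply: contraNneq N1_neq1 => z1; rewrite -zt z1 expr1n.
have [w wmz Re_zw] := exists_rootC_Re_gt m_gt1 z_unit z_neq1.
have Re_max y : y ^+ t = -1 -> 0 <= 'Im y -> 'Re y <= 'Re z := rootC_Re_max t_gt0.
have wt : w ^+ t = -1 by rewrite -tE exprM wmz zd.
have [Im_ge0 | Im_not_ge0] := boolP (0 <= 'Im w).
  by have := Re_max w wt Im_ge0; rewrite (lt_geF Re_zw).
have wt' : w^* ^+ t = -1 by rewrite -rmorphXn wt rmorphN1.
have Im'_ge0 : 0 <= 'Im w^*.
  by rewrite Im_conj oppr_ge0 ltW // real_ltNge ?Creal_Im.
by have := Re_max _ wt' Im'_ge0; rewrite Re_conj (lt_geF Re_zw).
Qed.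

Lemma expf_card_pred (F : finFieldType) (x : F) : x != 0 -> x ^+ #|F|.-1 = 1.
Proof.
move=> x_neq0; apply: (mulfI x_neq0); rewrite mulr1 -exprS prednK ?expf_card //.
by apply/card_gt0P; exists 0.
Qed.

Lemma expr_gcdn_eq1 (R : idomainType) (x : R) a b :
  (0 < a)%N -> x ^+ a = 1 -> x ^+ b = 1 -> x ^+ gcdn a b = 1.
Proof.
move=> a_gt0 xa1 xb1; have [k k_prim _] := prim_order_exists a_gt0 xa1.
apply/eqP; rewrite -(prim_order_dvd k_prim) dvdn_gcd.
by rewrite !(prim_order_dvd k_prim) xa1 xb1 eqxx.
Qed.

Section SubgroupCharacters.

Variables (F : finFieldType) (G : {set F}) (g : F).
Hypothesis G_subgroup : is_mult_subgroup G.

Local Notation n := (#|F|.-1 %/ #|G|)%N.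
Local Notation w := (omega #|G|).

Lemma subgroup_neq0 x : x \in G -> x != 0.
Proof. by case: G_subgroup => _ G0 _ _ xG; apply: contraNneq G0 => <-. Qed.

Lemma subgroupM x y : x \in G -> y \in G -> x * y \in G.
Proof. by case: G_subgroup => _ _ GM _; apply: GM. Qed.

Lemma big_subgroup_mulr {R : Type} {idx : R} {op : SemiGroup.com_law R}
    {H : F -> R} y :
  y \in G -> \big[op/idx]_(x in G) H x = \big[op/idx]_(x in G) H (x * y).
Proof.
move=> yG; have y_neq0 := subgroup_neq0 yG.
rewrite (reindex (fun x => x * y)); last first.
  by exists (fun x => x * y^-1) => x _; [exact: mulfK | exact: divfK].
apply: eq_bigl => x; apply/idP/idP => [xyG | xG]; last exact: subgroupM.
rewrite -(mulfK y_neq0 x); apply: subgroupM xyG _.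
by case: G_subgroup => _ _ _ GV; apply: GV.
Qed.

Lemma card_subgroup_gt0 : (0 < #|G|)%N.
Proof. by case: G_subgroup => G1 _ _ _; apply/card_gt0P; exists 1. Qed.

Lemma expr_card_subgroup x : x \in G -> x ^+ #|G| = 1.
Proof.
move=> xG; pose P := \prod_(y in G) y.
have P_neq0 : P != 0 by apply/prodf_neq0 => y; apply: subgroup_neq0.
have : P * 1 = P * x ^+ #|G|.
  by rewrite mulr1 {1}/P (big_subgroup_mulr xG) big_split prodr_const.
by move/(mulfI P_neq0).
Qed.

Hypothesis g_prim : (#|F|.-1).-primitive_root g.

Lemma dvdn_card_subgroup : (#|G| %| #|F|.-1)%N.
Proof.
set d := gcdn #|G| #|F|.-1.
have h_prim := dvdn_prim_root g_prim (dvdn_gcdr #|G| #|F|.-1).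
have G_sub : G \subset codom (fun i : 'I_d => g ^+ (#|F|.-1 %/ d) ^+ i).
  apply/subsetP => x xG; have x_neq0 := subgroup_neq0 xG.
  have xd1 : x ^+ d = 1.
    exact: expr_gcdn_eq1 card_subgroup_gt0 (expr_card_subgroup xG)
                         (expf_card_pred x_neq0).
  by have [i ->] := prim_rootP h_prim xd1; apply: codom_f.
have card_le_d : (#|G| <= d)%N.
  apply: leq_trans (subset_leq_card G_sub) _.
  by apply: leq_trans (leq_image_card _ _) _; rewrite card_ord.
have d_eq : d = #|G|.
  by apply/eqP; rewrite eqn_leq card_le_d dvdn_leq ?card_subgroup_gt0 ?dvdn_gcdl.
by rewrite -d_eq dvdn_gcdr.
Qed.

Lemma prim_root_subgroup : #|G|.-primitive_root (g ^+ n).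
Proof. exact: (dvdn_prim_root g_prim dvdn_card_subgroup). Qed.

Lemma subgroup_exprP x : x \in G -> exists l : 'I_#|G|, g ^+ (n * l) = x.
Proof.
move=> xG; have [l ->] := prim_rootP prim_root_subgroup (expr_card_subgroup xG).
by exists l; rewrite exprM.
Qed.

Lemma subgroup_expr_inj i j : (i < #|G|)%N -> (j < #|G|)%N ->
  g ^+ (n * i) = g ^+ (n * j) -> i = j.
Proof.
move=> it jt /eqP; rewrite !exprM (eq_prim_root_expr prim_root_subgroup).
by rewrite !modn_small // => /eqP.
Qed.

Lemma chiE a x (l : 'I_#|G|) :
  x \in G -> g ^+ (n * l) = x -> chi G g a x = w ^+ (a * l).
Proof.
move=> xG gl_x; rewrite /chi xG.
case: pickP => [l' /eqP gl'_x | no_l]; last by have := no_l l; rewrite gl_x eqxx.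
by rewrite (subgroup_expr_inj (ltn_ord l') (ltn_ord l) (etrans gl'_x (esym gl_x))).
Qed.

Lemma chi_mul_conjC a x : x \in G -> chi G g a x * (chi G g a x)^* = 1.
Proof.
move=> xG; have [l gl_x] := subgroup_exprP xG; rewrite (chiE a xG gl_x).
apply: (unity_root_mul_conjC card_subgroup_gt0).
by rewrite exprAC (prim_expr_order (omega_prim card_subgroup_gt0)) expr1n.
Qed.

Lemma chiM a x y :
  x \in G -> y \in G -> chi G g a (x * y) = chi G g a x * chi G g a y.
Proof.
move=> xG yG.
have [i gi_x] := subgroup_exprP xG; have [j gj_y] := subgroup_exprP yG.
pose k := Ordinal (ltn_pmod (i + j) card_subgroup_gt0).
have gk_xy : g ^+ (n * k) = x * y.
  by rewrite -gi_x -gj_y !exprM /= (prim_expr_mod prim_root_subgroup) exprD.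
have wa_t : (w ^+ a) ^+ #|G| = 1.
  by rewrite exprAC (prim_expr_order (omega_prim card_subgroup_gt0)) expr1n.
rewrite (chiE a (subgroupM xG yG) gk_xy) (chiE a xG gi_x) (chiE a yG gj_y).
by rewrite !exprM -exprD /= (expr_mod _ wa_t).
Qed.

Lemma sum_chi_conjC_mul x y : x \in G -> y \in G ->
  \sum_(1 <= a < #|G|.+1) (chi G g a x)^* * chi G g a y
    = if x == y then #|G|%:R else 0.
Proof.
move=> xG yG.
have [i gi_x] := subgroup_exprP xG; have [j gj_y] := subgroup_exprP yG.
have w_prim := omega_prim card_subgroup_gt0.
pose r := w ^+ j * (w ^+ i)^*.
have chi_r a : (chi G g a x)^* * chi G g a y = r ^+ a.
  rewrite (chiE a xG gi_x) (chiE a yG gj_y) /r [RHS]exprMn -rmorphXn -!exprM.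
  by rewrite mulrC [(a * i)%N]mulnC [(a * j)%N]mulnC.
rewrite (eq_bigr _ (fun a _ => chi_r a)) big_add1 big_mkord.
under eq_bigr do rewrite exprS.
rewrite -mulr_sumr sum_prim_root_expr_conjC ?ltn_ord //.
have -> : (x == y) = (j == i :> nat).
  apply/eqP/eqP => [xy | ji]; last by rewrite -gi_x -gj_y ji.
  by apply: subgroup_expr_inj; rewrite ?ltn_ord // gi_x gj_y xy.
case: eqP => [ji | _]; last by rewrite mulr0.
have r1 : r = 1.
  by apply/eqP; rewrite /r (prim_root_mul_conjC_eq1 w_prim) ?ltn_ord ?ji.
by rewrite r1 mul1r.
Qed.

Lemma coef_mul_fvec a (h : F -> algC) y : y \in G ->
  coef G g a h * fvec G g a y
    = #|G|%:R^-1 * \sum_(c in G) h (c * y) * (chi G g a c)^*.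
Proof.
move=> yG; pose s := (sqrtC (#|G|%:R : algC))^-1.
have s_real : s^* = s by rewrite geC0_conj // invr_ge0 sqrtC_ge0 ler0n.
have s_sqr : s * s = #|G|%:R^-1 by rewrite -invfM -expr2 sqrtCK.
rewrite /coef /fvec -/s mulr_suml (big_subgroup_mulr yG) mulr_sumr.
apply: eq_bigr => c cG; rewrite (chiM a cG yG) !rmorphM /= s_real -s_sqr.
have := chi_mul_conjC a yG; set X := chi G g a y => X_unit.
transitivity (s * s * (h (c * y) * (chi G g a c)^*) * (X * X^*)); first by ring.
by rewrite X_unit mulr1.
Qed.

Lemma sum_coef_fvec (h1 h2 : F -> algC) x y : x \in G -> y \in G ->
  \sum_(1 <= a < #|G|.+1)
      coef G g a h1 * (coef G g a h2)^* * (fvec G g a y * (fvec G g a x)^*)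
    = #|G|%:R^-1 * \sum_(c in G) h1 (c * y) * (h2 (c * x))^*.
Proof.
move=> xG yG; set T := (#|G|%:R : algC).
have T_neq0 : T != 0 by rewrite pnatr_eq0 -lt0n card_subgroup_gt0.
have T_real : (T^-1)^* = T^-1 by rewrite geC0_conj // invr_ge0 ler0n.
transitivity (\sum_(1 <= a < #|G|.+1) T^-1 * T^-1 *
    \sum_(c in G) \sum_(c' in G)
      h1 (c * y) * (h2 (c' * x))^* * ((chi G g a c)^* * chi G g a c')).
  apply: eq_bigr => a _.
  have regroup (c1 c2 f1 f2 : algC) :
      c1 * c2^* * (f1 * f2^*) = (c1 * f1) * (c2 * f2)^*.
    by rewrite rmorphM; ring.
  rewrite regroup !coef_mul_fvec // -/T rmorphM /= T_real mulrACA; congr (_ * _).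
  rewrite rmorph_sum mulr_suml; apply: eq_bigr => c _.
  rewrite mulr_sumr; apply: eq_bigr => c' _.
  by rewrite rmorphM /= conjCK; ring.
rewrite -mulr_sumr exchange_big /=.
rewrite (eq_bigr (fun c => T * (h1 (c * y) * (h2 (c * x))^*))); last first.
  move=> c cG; rewrite exchange_big /= (bigD1 c) //= [X in _ + X]big1.
    by rewrite addr0 -mulr_sumr sum_chi_conjC_mul // eqxx mulrC.
  move=> c' /andP[c'G c'_neq_c].
  by rewrite -mulr_sumr sum_chi_conjC_mul // eq_sym (negbTE c'_neq_c) mulr0.
by rewrite -mulr_sumr; field.
Qed.

End SubgroupCharacters.

Theorem lemma8 (F : finFieldType) (G : {set F}) (g : F) (h1 h2 gf : F -> algC) :
  is_mult_subgroup G ->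
  (#|F|.-1).-primitive_root g ->
  supported_on G h1 -> supported_on G h2 ->
  (#|G|%:R)^-1 * \sum_(c in G) Tform G gf (dil h1 c) (dil h2 c)
  = \sum_(1 <= a < #|G|.+1)
      coef G g a h1 * Num.conj (coef G g a h2) *
      Tform G gf (fvec G g a) (fvec G g a).
Proof.
move=> G_subgroup g_prim _ _; rewrite /Tform /dil.
transitivity (\sum_(x in G) \sum_(y in G) gf (x - y) *
    (#|G|%:R^-1 * \sum_(c in G) h1 (c * y) * (h2 (c * x))^*)).
  rewrite mulr_sumr; under eq_bigr do rewrite mulr_sumr.
  under eq_bigr do under eq_bigr do rewrite mulr_sumr.
  rewrite exchange_big; apply: eq_bigr => x _.
  rewrite exchange_big; apply: eq_bigr => y _.
  by rewrite !mulr_sumr; apply: eq_bigr => c _; ring.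
transitivity (\sum_(x in G) \sum_(y in G) \sum_(1 <= a < #|G|.+1) gf (x - y) *
    (coef G g a h1 * (coef G g a h2)^* * (fvec G g a y * (fvec G g a x)^*))).
  apply: eq_bigr => x xG; apply: eq_bigr => y yG.
  by rewrite -mulr_sumr sum_coef_fvec.
under eq_bigr do rewrite exchange_big.
rewrite exchange_big; apply: eq_bigr => a _.
rewrite mulr_sumr; apply: eq_bigr => x _.
by rewrite mulr_sumr; apply: eq_bigr => y _; ring.
Qed.
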